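(* Let $(X,\le,\to,\rightsquigarrow,d,u)$ be a weakly involutive unital quantum B-algebra and let $(\exists,\forall)$ be a pair of strong synchronized maps on $X$ such that $\exists$ is a weak existential quantifier (equivalently, $\forall$ is a weak universal quantifier). Then for all $x,y\in X$: (1) $\forall(\forall x\to\forall y)=\forall x\to\forall y$ and $\forall(\forall x\rightsquigarrow\forall y)=\forall x\rightsquigarrow\forall y$; (2) $\exists(\exists x\to\exists y)=\exists x\to\exists y$ and $\exists(\exists x\rightsquigarrow\exists y)=\exists x\rightsquigarrow\exists y$; (3) $\forall(\forall x\odot\forall y)=\forall x\odot\forall y$; (4) $\exists(\exists x\odot\exists y)=\exists x\odot\exists y$; (5) $\forall((x\to\forall y)\rightsquigarrow\forall y)=(\forall x\to\forall y)\rightsquigarrow\forall y$ and $\forall((x\rightsquigarrow\forall y)\to\forall y)=(\forall x\rightsquigarrow\forall y)\to\forall y$.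
   Context: A quantum B-algebra is a partially ordered set $(X,\le)$ with two binary operations $\to$ and $\rightsquigarrow$ such that for all $x,y,z\in X$: $y\to z\le (x\to y)\to(x\to z)$; $y\rightsquigarrow z\le (x\rightsquigarrow y)\to(x\rightsquigarrow z)$; $y\le z$ implies $x\to y\le x\to z$; and $x\le y\to z$ iff $y\le x\rightsquigarrow z$. It is unital if there is $u\in X$ with $u\to x=u\rightsquigarrow x=x$ for all $x$. A pointed quantum B-algebra has a fixed $d\in X$; write $x^{-}=x\to d$, $x^{\sim}=x\rightsquigarrow d$; it is weakly involutive if $(x^{-})^{\sim}=(x^{\sim})^{-}=x$ for all $x$. In a weakly involutive quantum B-algebra define $x\odot y=(x\to y^{-})^{\sim}$ $(=(y\rightsquigarrow x^{\sim})^{-})$ and $x\oplus y=y^{\sim}\to x$ $(=x^{-}\rightsquigarrow y)$. A map $\tau:X\to X$ is good if $(\tau(x^{-}))^{\sim}=(\tau(x^{\sim}))^{-}$ for all $x$; good maps $\tau,\sigma$ are synchronized if $\sigma(x)=(\tau(x^{-}))^{\sim}=(\tau(x^{\sim}))^{-}$ for all $x$; they are strong synchronized if moreover $\tau\circ\sigma=\sigma$ (which for synchronized maps is equivalent to $\sigma\circ\tau=\tau$). A good map $\exists$ is a weak existential quantifier if for all $x,y$: $\exists d=d$; $\exists u=u$; $x\le\exists x$; $\exists(x\oplus\exists y)=\exists(\exists x\oplus y)=\exists x\oplus\exists y$; $\exists(x\oplus x)=\exists x\oplus\exists x$; $\exists(x\odot\exists y)=\exists(\exists x\odot y)=\exists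 x\odot\exists y$. A good map $\forall$ is a weak universal quantifier if for all $x,y$: $\forall u=u$; $\forall d=d$; $\forall x\le x$; $\forall(x\odot\forall y)=\forall(\forall x\odot y)=\forall x\odot\forall y$; $\forall(x\odot x)=\forall x\odot\forall x$; $\forall(x\oplus\forall y)=\forall(\forall x\oplus y)=\forall x\oplus\forall y$. *)

Record QBAlg := {
  qcar :> Type;
  qle : qcar -> qcar -> Prop;
  qle_refl : forall x, qle x x;
  qle_antisym : forall x y, qle x y -> qle y x -> x = y;
  qle_trans : forall x y z, qle x y -> qle y z -> qle x z;
  qimp : qcar -> qcar -> qcar;
  qsimp : qcar -> qcar -> qcar;
  qb1 : forall x y z, qle (qimp y z) (qimp (qimp x y) (qimp x z));
  qb2 : forall x y z, qle (qsimp y z) (qsimp (qsimp x y) (qsimp x z));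
  qb3 : forall x y z, qle y z -> qle (qimp x y) (qimp x z);
  qb4 : forall x y z, qle x (qimp y z) <-> qle y (qsimp x z)
}.

Arguments qle {X} : rename.
Arguments qimp {X} : rename.
Arguments qsimp {X} : rename.

Section Defs.
Variable X : QBAlg.

Definition unital_unit (u : X) : Prop :=
  forall x : X, qimp u x = x /\ qsimp u x = x.

Definition nmin (d x : X) : X := qimp x d.
Definition ntil (d x : X) : X := qsimp x d.

Definition weakly_involutive (d : X) : Prop :=
  forall x : X, ntil d (nmin d x) = x /\ nmin d (ntil d x) = x.

Definition odot (d x y : X) : X := ntil d (qimp x (nmin d y)).
Definition oplus (d x y : X) : X := qimp (ntil d y) x.

Definition good_map (d : X) (tau : X -> X) : Prop :=
  forall x : X, ntil d (tau (nmin d x)) = nmin d (tau (ntil d x)).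

Definition synchronized (d : X) (tau sigma : X -> X) : Prop :=
  good_map d tau /\ good_map d sigma /\
  forall x : X, sigma x = ntil d (tau (nmin d x)) /\
                sigma x = nmin d (tau (ntil d x)).

Definition strong_synchronized (d : X) (tau sigma : X -> X) : Prop :=
  synchronized d tau sigma /\ (forall x : X, tau (sigma x) = sigma x).

Definition weak_existential_quantifier (d u : X) (E : X -> X) : Prop :=
  good_map d E /\
  E d = d /\ E u = u /\
  (forall x : X, qle x (E x)) /\
  (forall x y : X, E (oplus d x (E y)) = oplus d (E x) (E y) /\
                   E (oplus d (E x) y) = oplus d (E x) (E y)) /\
  (forall x : X, E (oplus d x x) = oplus d (E x) (E x)) /\
  (forall x y : X, E (odot d x (E y)) = odot d (E x) (E y) /\
                   E (odot d (E x) y) = odot d (E x) (E y)).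

Definition weak_universal_quantifier (d u : X) (A : X -> X) : Prop :=
  good_map d A /\
  A u = u /\ A d = d /\
  (forall x : X, qle (A x) x) /\
  (forall x y : X, A (odot d x (A y)) = odot d (A x) (A y) /\
                   A (odot d (A x) y) = odot d (A x) (A y)) /\
  (forall x : X, A (odot d x x) = odot d (A x) (A x)) /\
  (forall x y : X, A (oplus d x (A y)) = oplus d (A x) (A y) /\
                   A (oplus d (A x) y) = oplus d (A x) (A y)).

End Defs.


(* The maps E and A = (E (x^-))^~ have the same fixed points, and in a weakly
   involutive algebra these fixed points are closed under both negations, both
   implications and (.), because the oplus-laws of E give E (x -> b) = A x -> b
   and E (x ~> b) = A x ~> b for every fixed b.  This yields (1)-(4).  For (5),
   ((x -> b) ~> b)^- = b^- (.) (x -> b), so the odot-law of E reduces the claim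
   to E (x -> b) = A x -> b again, and symmetrically for the other half. *)

Lemma qimp_qsimp_comm (X : QBAlg) (a b c : X) :
  qimp a (qsimp b c) = qsimp b (qimp a c).
Proof.
  apply qle_antisym.
  - apply qb4.
    apply qle_trans with (qimp (qsimp b c) c); [apply qb4, qle_refl | apply qb1].
  - apply qb4.
    apply qle_trans with (qsimp (qimp a c) c); [apply qb4, qle_refl | apply qb2].
Qed.

Section WeaklyInvolutive.

Variable X : QBAlg.
Variable d : X.
Hypothesis Hwi : weakly_involutive X d.

Local Notation nm := (nmin X d).
Local Notation nt := (ntil X d).

Lemma ntil_nmin (x : X) : nt (nm x) = x.
Proof. exact (proj1 (Hwi x)). Qed.

Lemma nmin_ntil (x : X) : nm (nt x) = x.
Proof. exact (proj2 (Hwi x)). Qed.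

Lemma nmin_antitone (x y : X) : qle x y -> qle (nm y) (nm x).
Proof.
  intro Hxy. apply qb4. change (qle x (nt (nm y))). rewrite ntil_nmin. exact Hxy.
Qed.

Lemma ntil_antitone (x y : X) : qle x y -> qle (nt y) (nt x).
Proof.
  intro Hxy. apply qb4. change (qle x (nm (nt y))). rewrite nmin_ntil. exact Hxy.
Qed.

Lemma qimp_contra (x y : X) : qimp x y = qsimp (nm y) (nm x).
Proof.
  apply qle_antisym.
  - apply qb4, qb1.
  - pose proof (proj2 (qb4 X _ (nt (nm x)) (nt (nm y))) (qb2 X (nm y) (nm x) d))
      as H.
    rewrite !ntil_nmin in H. exact H.
Qed.

Lemma oplusE (x y : X) : oplus X d x y = qsimp (nm x) y.
Proof. unfold oplus. rewrite qimp_contra, nmin_ntil. reflexivity. Qed.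

Lemma ntil_eq_nmin (P Q : X) :
  (forall t, qle (nm t) P <-> qle (nt t) Q) -> nt P = nm Q.
Proof.
  intro HPQ. apply qle_antisym.
  - assert (H : qle (nm (nm Q)) P)
      by (apply HPQ; rewrite ntil_nmin; apply qle_refl).
    apply ntil_antitone in H. rewrite ntil_nmin in H. exact H.
  - assert (H : qle (nt (nt P)) Q)
      by (apply HPQ; rewrite nmin_ntil; apply qle_refl).
    apply nmin_antitone in H. rewrite nmin_ntil in H. exact H.
Qed.

Lemma qsimp_nmin (t y : X) : qsimp (nm t) (nm y) = qimp y t.
Proof.
  unfold nmin at 2. rewrite <- qimp_qsimp_comm.
  fold (ntil X d (nm t)). rewrite ntil_nmin. reflexivity.
Qed.

Lemma qimp_ntil (t x : X) : qimp (nt t) (nt x) = qsimp x t.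
Proof.
  unfold ntil at 2. rewrite qimp_qsimp_comm.
  fold (nmin X d (nt t)). rewrite nmin_ntil. reflexivity.
Qed.

Lemma odotE (x y : X) : odot X d x y = nm (qsimp y (nt x)).
Proof.
  apply ntil_eq_nmin. intro t.
  assert (hP : qle (nm t) (qimp x (nm y)) <-> qle x (qimp y t))
    by (rewrite <- (qsimp_nmin t y); apply qb4).
  assert (hQ : qle (nt t) (qsimp y (nt x)) <-> qle x (qimp y t))
    by (pose proof (qb4 X y (nt t) (nt x)) as H; rewrite qimp_ntil in H;
        pose proof (qb4 X x y t); tauto).
  split; intro H; [apply hQ, hP, H | apply hP, hQ, H].
Qed.

Lemma nmin_qsimp (a b : X) : nm (qsimp a b) = odot X d (nm b) a.
Proof. rewrite odotE, ntil_nmin. reflexivity. Qed.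

Lemma ntil_qimp (a b : X) : nt (qimp a b) = odot X d a (nt b).
Proof. unfold odot. rewrite nmin_ntil. reflexivity. Qed.

Variable E A : X -> X.
Hypothesis A_nmin : forall x, A x = nt (E (nm x)).
Hypothesis A_ntil : forall x, A x = nm (E (nt x)).
Hypothesis E_A : forall x, E (A x) = A x.
Hypothesis E_d : E d = d.
Hypothesis E_oplus_r : forall x y, E (oplus X d x (E y)) = oplus X d (E x) (E y).
Hypothesis E_oplus_l : forall x y, E (oplus X d (E x) y) = oplus X d (E x) (E y).

Lemma E_idem (x : X) : E (E x) = E x.
Proof.
  pose proof (E_oplus_r d x) as H. rewrite E_d in H.
  unfold oplus in H. fold (nmin X d (nt (E x))) in H.
  rewrite nmin_ntil in H. exact H.
Qed.

Lemma E_nmin_fixed (a : X) : E a = a -> E (nm a) = nm a.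
Proof.
  intro Ea. assert (H : A (nm a) = nm a) by (rewrite A_ntil, ntil_nmin, Ea; reflexivity).
  rewrite <- H. apply E_A.
Qed.

Lemma E_ntil_fixed (a : X) : E a = a -> E (nt a) = nt a.
Proof.
  intro Ea. assert (H : A (nt a) = nt a) by (rewrite A_nmin, nmin_ntil, Ea; reflexivity).
  rewrite <- H. apply E_A.
Qed.

Lemma A_fixed (a : X) : E a = a -> A a = a.
Proof. intro Ea. rewrite A_nmin, (E_nmin_fixed a Ea), ntil_nmin. reflexivity. Qed.

Lemma E_qimp_fixed_r (x b : X) : E b = b -> E (qimp x b) = qimp (A x) b.
Proof.
  intro Eb. pose proof (E_oplus_l b (nm x)) as H.
  unfold oplus in H. rewrite ntil_nmin, Eb, <- A_nmin in H. exact H.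
Qed.

Lemma E_qsimp_fixed_r (x b : X) : E b = b -> E (qsimp x b) = qsimp (A x) b.
Proof.
  intro Eb. pose proof (E_oplus_r (nt x) b) as H.
  rewrite !oplusE, nmin_ntil, Eb, <- A_ntil in H. exact H.
Qed.

Lemma E_qimp_fixed (a b : X) : E a = a -> E b = b -> E (qimp a b) = qimp a b.
Proof. intros Ea Eb. rewrite E_qimp_fixed_r, A_fixed; auto. Qed.

Lemma E_qsimp_fixed (a b : X) : E a = a -> E b = b -> E (qsimp a b) = qsimp a b.
Proof. intros Ea Eb. rewrite E_qsimp_fixed_r, A_fixed; auto. Qed.

Lemma E_odot_fixed (a b : X) : E a = a -> E b = b -> E (odot X d a b) = odot X d a b.
Proof.
  intros Ea Eb. unfold odot.
  apply E_ntil_fixed, E_qimp_fixed; [exact Ea | apply E_nmin_fixed, Eb].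
Qed.

Hypothesis E_odot_r : forall x y, E (odot X d x (E y)) = odot X d (E x) (E y).
Hypothesis E_odot_l : forall x y, E (odot X d (E x) y) = odot X d (E x) (E y).

Lemma A_qsimp_qimp_fixed (x b : X) :
  E b = b -> A (qsimp (qimp x b) b) = qsimp (qimp (A x) b) b.
Proof.
  intro Eb. pose proof (E_nmin_fixed b Eb) as Enb.
  rewrite A_nmin, nmin_qsimp, <- Enb, E_odot_l, Enb, E_qimp_fixed_r by exact Eb.
  rewrite <- nmin_qsimp, ntil_nmin. reflexivity.
Qed.

Lemma A_qimp_qsimp_fixed (x b : X) :
  E b = b -> A (qimp (qsimp x b) b) = qimp (qsimp (A x) b) b.
Proof.
  intro Eb. pose proof (E_ntil_fixed b Eb) as Etb.
  rewrite A_ntil, ntil_qimp, <- Etb, E_odot_r, Etb, E_qsimp_fixed_r by exact Eb.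
  rewrite <- ntil_qimp, nmin_ntil. reflexivity.
Qed.

End WeaklyInvolutive.

Theorem proposition5p12 (X : QBAlg) (d u : X) (E A : X -> X)
  (Hu : unital_unit X u)
  (Hwi : weakly_involutive X d)
  (Hsync : strong_synchronized X d E A)
  (HE : weak_existential_quantifier X d u E) :
  forall x y : X,
    (A (qimp (A x) (A y)) = qimp (A x) (A y) /\
     A (qsimp (A x) (A y)) = qsimp (A x) (A y)) /\
    (E (qimp (E x) (E y)) = qimp (E x) (E y) /\
     E (qsimp (E x) (E y)) = qsimp (E x) (E y)) /\
    A (odot X d (A x) (A y)) = odot X d (A x) (A y) /\
    E (odot X d (E x) (E y)) = odot X d (E x) (E y) /\
    (A (qsimp (qimp x (A y)) (A y)) = qsimp (qimp (A x) (A y)) (A y) /\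
     A (qimp (qsimp x (A y)) (A y)) = qimp (qsimp (A x) (A y)) (A y)).
Proof.
  destruct Hsync as [[_ [_ A_E]] E_A].
  destruct HE as [_ [E_d [_ [_ [E_oplus [_ E_odot]]]]]].
  assert (A_nmin : forall x, A x = ntil X d (E (nmin X d x))) by apply A_E.
  assert (A_ntil : forall x, A x = nmin X d (E (ntil X d x))) by apply A_E.
  assert (E_oplus_r : forall x y, E (oplus X d x (E y)) = oplus X d (E x) (E y))
    by apply E_oplus.
  assert (E_oplus_l : forall x y, E (oplus X d (E x) y) = oplus X d (E x) (E y))
    by apply E_oplus.
  assert (E_odot_r : forall x y, E (odot X d x (E y)) = odot X d (E x) (E y))
    by apply E_odot.
  assert (E_odot_l : forall x y, E (odot X d (E x) y) = odot X d (E x) (E y))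
    by apply E_odot.
  pose proof (E_idem X d Hwi E E_d E_oplus_r) as E_idem.
  intros x y.
  repeat split; eauto 6 using A_fixed, E_qimp_fixed, E_qsimp_fixed, E_odot_fixed,
    A_qsimp_qimp_fixed, A_qimp_qsimp_fixed.
Qed.
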